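(* Suppose $\kappa$ is Mahlo and $\kappa\le\lambda$. Then for every function $f:P_\kappa\lambda\to P_\kappa\lambda$, the set $C_f$ is a $1$-club subset of $P_\kappa\lambda$.
   Context: $P_\kappa\lambda=\{x\subseteq\lambda:|x|<\kappa\}$, $\kappa_x=|x\cap\kappa|$. $C_f=\{x\in P_\kappa\lambda: x\cap\kappa\neq\emptyset,\ f[P_{\kappa_x}x]\subseteq P_{\kappa_x}x\}$. A set is strongly stationary if it meets every $C_f$; $\mathrm{NSS}_{\kappa,\lambda}$ is the ideal of non-strongly-stationary sets; for $x\in P_\kappa\lambda$, $\mathrm{NSS}_{\kappa_x,x}$ is the analogous ideal on $P_{\kappa_x}x$ (with $\kappa_x$ in place of $\kappa$, $x$ in place of $\lambda$). $C\subseteq P_\kappa\lambda$ is $1$-club iff $C\in\mathrm{NSS}^+_{\kappa,\lambda}$ and for every $x\in P_\kappa\lambda$ with $\kappa_x$ inaccessible and $C\cap P_{\kappa_x}x\in\mathrm{NSS}^+_{\kappa_x,x}$ we have $x\in C$. *)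

From Stdlib Require Import Classical.

Set Implicit Arguments.

(* A strict well-order: its elements play the role of ordinals, each element
   a being identified with the set of its predecessors  seg a. *)
Record WO := {
  wcar :> Type;
  wlt : wcar -> wcar -> Prop;
  wlt_wf : well_founded wlt;
  wlt_trans : forall a b c, wlt a b -> wlt b c -> wlt a c;
  wlt_total : forall a b, wlt a b \/ a = b \/ wlt b a
}.

Section Defs.
Variable O : WO.
Notation "a < b" := (wlt O a b).
Definition wle (a b : O) : Prop := a < b \/ a = b.
Notation "a <= b" := (wle a b).

Definition set (T : Type) := T -> Prop.

Definition seg (a : O) : set O := fun b => b < a.

Definition cle {T U : Type} (A : set T) (B : set U) : Prop :=
  exists f : sig A -> sig B, forall u v, f u = f v -> u = v.
Definition clt {T U : Type} (A : set T) (B : set U) : Prop :=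
  cle A B /\ ~ cle B A.
Definition ceq {T U : Type} (A : set T) (B : set U) : Prop :=
  cle A B /\ cle B A.

Definition inter (A B : set O) : set O := fun z => A z /\ B z.

Definition is_card_of (alpha : O) (A : set O) : Prop :=
  ceq (seg alpha) A /\ forall beta, ceq (seg beta) A -> ~ beta < alpha.

Definition Pk (mu : O) (X : set O) (y : set O) : Prop :=
  (forall z, y z -> X z) /\ clt y (seg mu).

(* C_f relative to P_mu X:
   { y in P_mu X : y cap mu <> empty, f[P_{mu_y} y] subset P_{mu_y} y },
   where mu_y = |y cap mu|. *)
Definition Cf (mu : O) (X : set O) (f : set O -> set O) (y : set O) : Prop :=
  Pk mu X y /\ (exists z, y z /\ z < mu) /\
  exists a, is_card_of a (inter y (seg mu)) /\
            forall w, Pk a y w -> Pk a y (f w).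

Definition strongly_stationary (mu : O) (X : set O) (A : set (set O)) : Prop :=
  forall f : set O -> set O,
    (forall y, Pk mu X y -> Pk mu X (f y)) ->
    exists y, A y /\ Cf mu X f y.

Definition nat_set : set nat := fun _ => True.
Definition is_cardinal (a : O) : Prop := forall b, b < a -> ~ cle (seg a) (seg b).
Definition infinite_ord (a : O) : Prop := cle nat_set (seg a).
Definition uncountable (a : O) : Prop := ~ cle (seg a) nat_set.
Definition unbounded_in (A : set O) (a : O) : Prop :=
  forall b, b < a -> exists c, A c /\ c < a /\ b <= c.
Definition regular (a : O) : Prop :=
  infinite_ord a /\ is_cardinal a /\
  forall A : set O, (forall z, A z -> z < a) -> unbounded_in A a ->
    ~ clt A (seg a).
Definition powerset_of (b : O) : set (set O) := fun Y => forall z, Y z -> z < b.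
Definition strong_limit (a : O) : Prop :=
  forall b, b < a -> clt (powerset_of b) (seg a).
Definition inaccessible (a : O) : Prop :=
  uncountable a /\ regular a /\ strong_limit a.

Definition club_in (C : set O) (k : O) : Prop :=
  (forall z, C z -> z < k) /\ unbounded_in C k /\
  forall g, g < k -> (exists d, C d /\ d < g) ->
    (forall b, b < g -> exists d, C d /\ b < d /\ d < g) -> C g.
Definition stationary_in (S : set O) (k : O) : Prop :=
  forall C, club_in C k -> exists a, S a /\ C a.

Definition Mahlo (k : O) : Prop :=
  inaccessible k /\ stationary_in (fun a => a < k /\ regular a) k.

Definition one_club (mu : O) (X : set O) (C : set (set O)) : Prop :=
  (forall y, C y -> Pk mu X y) /\
  strongly_stationary mu X C /\
  forall x, Pk mu X x ->
    forall a, is_card_of a (inter x (seg mu)) -> inaccessible a ->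
      strongly_stationary a x (fun y => C y /\ Pk a x y) -> C x.

End Defs.

Arguments wle {O}. Arguments seg {O}. Arguments inter {O}. Arguments is_card_of {O}. Arguments Pk {O}. Arguments Cf {O}.
Arguments strongly_stationary {O}. Arguments is_cardinal {O}. Arguments infinite_ord {O}.
Arguments uncountable {O}. Arguments unbounded_in {O}. Arguments regular {O}. Arguments powerset_of {O}.
Arguments strong_limit {O}. Arguments inaccessible {O}. Arguments club_in {O}. Arguments stationary_in {O}.
Arguments Mahlo {O}. Arguments one_club {O}.

From Stdlib Require Import Classical ClassicalEpsilon FunctionalExtensionality PropExtensionality ProofIrrelevance.

(* Strong stationarity: given a second function g, close segments of kappa under
   f, g and under w |-> (an ordinal below kappa bounding the sizes of f w and g w),
   in kappa stages.  The ordinals m < kappa whose stage meets kappa exactly in m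
   form a club, so Mahloness yields a regular such m; its stage has trace m on
   kappa and is closed under f and g on P_m, hence lies in C_f and in C_g.
   The reflection clause of 1-clubness comes from applying strong stationarity
   in P_a x to constant functions. *)

Notation "a ≺ b" := (wlt _ a b) (at level 70).
Notation "a ≼ b" := (wle a b) (at level 70).

Lemma sig_ext {T : Type} (P : set T) (s t : sig P) : proj1_sig s = proj1_sig t -> s = t.
Proof. destruct s, t; apply subset_eq_compat. Qed.

Definition inj_on {T U : Type} (g : T -> U) (A : set T) (B : set U) : Prop :=
  (forall x, A x -> B (g x)) /\ (forall x y, A x -> A y -> g x = g y -> x = y).

Lemma inj_on_cle {T U : Type} (g : T -> U) (A : set T) (B : set U) :
  inj_on g A B -> cle A B.
Proof.
  intros [Hmap Hinj].
  exists (fun s => exist B (g (proj1_sig s)) (Hmap _ (proj2_sig s))).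
  intros [x hx] [y hy] E. apply sig_ext, Hinj; auto.
  exact (f_equal (@proj1_sig _ _) E).
Qed.

Lemma cle_inj_on {T U : Type} (u0 : U) (A : set T) (B : set U) :
  cle A B -> exists g : T -> U, inj_on g A B.
Proof.
  intros [h Hh].
  exists (fun x => match excluded_middle_informative (A x) with
                   | left H => proj1_sig (h (exist _ x H)) | right _ => u0 end).
  split.
  - intros x Hx. destruct (excluded_middle_informative (A x)); [apply proj2_sig|contradiction].
  - intros x y Hx Hy. destruct (excluded_middle_informative (A x)); [|contradiction].
    destruct (excluded_middle_informative (A y)); [|contradiction].
    intros E. apply sig_ext, Hh in E. exact (f_equal (@proj1_sig _ _) E).
Qed.

Lemma cle_incl {T : Type} (A B : set T) : (forall x, A x -> B x) -> cle A B.
Proof. intros H. apply (inj_on_cle (fun x => x)). split; auto. Qed.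

Lemma cle_trans {T U V : Type} (A : set T) (B : set U) (C : set V) :
  cle A B -> cle B C -> cle A C.
Proof. intros [f Hf] [g Hg]. exists (fun s => g (f s)). auto. Qed.

Lemma cle_clt_trans {T U V : Type} (A : set T) (B : set U) (C : set V) :
  cle A B -> clt B C -> clt A C.
Proof.
  intros HAB [HBC HCB]. split; [eapply cle_trans; eauto|].
  intros HCA. apply HCB. eapply cle_trans; eauto.
Qed.

Lemma clt_cle_trans {T U V : Type} (A : set T) (B : set U) (C : set V) :
  clt A B -> cle B C -> clt A C.
Proof.
  intros [HAB HBA] HBC. split; [eapply cle_trans; eauto|].
  intros HCA. apply HBA. eapply cle_trans; eauto.
Qed.

Lemma cle_image {T U : Type} (A : set T) (g : T -> U) :
  cle (fun z => exists x, A x /\ z = g x) A.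
Proof.
  exists (fun s => let (x, Hx) := constructive_indefinite_description _ (proj2_sig s) in
                   exist A x (proj1 Hx)).
  intros [z hz] [z' hz'] E. simpl in E.
  destruct (constructive_indefinite_description _ hz) as [x [Ax ->]].
  destruct (constructive_indefinite_description _ hz') as [x' [Ax' ->]].
  apply (f_equal (@proj1_sig _ _)) in E; simpl in E; subst.
  apply sig_ext; reflexivity.
Qed.

Lemma cle_inhabited {T U : Type} (A : set T) (B : set U) (x : T) :
  cle A B -> A x -> exists y, B y.
Proof. intros [h _] Ax. exists (proj1_sig (h (exist _ x Ax))). apply proj2_sig. Qed.

Lemma clt_empty {T U : Type} (B : set U) : (exists y, B y) -> clt (fun _ : T => False) B.
Proof.
  intros [y By]. split.
  - exists (fun s => False_rect _ (proj2_sig s)). intros [? []].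
  - intros HB. destruct (cle_inhabited _ _ _ HB By) as [? []].
Qed.

Section Ordinals.
Context {O : WO}.

Lemma wf_min (P : O -> Prop) :
  (exists x, P x) -> exists m, P m /\ forall y, P y -> ~ y ≺ m.
Proof.
  intros [x Hx]. revert Hx. induction (wlt_wf O x) as [x _ IH]. intros Hx.
  destruct (classic (exists y, P y /\ y ≺ x)) as [[y [Py Hyx]]|N].
  - exact (IH y Hyx Py).
  - exists x; split; auto. intros y Py Hyx; apply N; eauto.
Qed.

Lemma wlt_wle_trans (a b c : O) : a ≺ b -> b ≼ c -> a ≺ c.
Proof. intros H [H'|<-]; [eapply wlt_trans; eauto|auto]. Qed.

Lemma wlt_or_wle (a b : O) : a ≺ b \/ b ≼ a.
Proof. destruct (wlt_total O a b) as [h|[->|h]]; [left|right; right|right; left]; auto. Qed.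

Lemma wle_max (a b : O) : exists c, (c = a \/ c = b) /\ a ≼ c /\ b ≼ c.
Proof.
  destruct (wlt_or_wle a b) as [h|h].
  - exists b. split; [right|split; [left|right]]; auto.
  - exists a. split; [left|split; [right|]]; auto.
Qed.

Lemma regular_cardinal (m : O) : regular m -> is_cardinal m.
Proof. intros [_ [H _]]; exact H. Qed.

Lemma regular_inhabited (m : O) : regular m -> exists z, z ≺ m.
Proof.
  intros [[e _] _]. destruct (e (exist _ 0 I)) as [z hz]. exists z; exact hz.
Qed.

Lemma clt_seg (k a : O) : is_cardinal k -> a ≺ k -> clt (seg a) (seg k).
Proof.
  intros Hk Ha. split; [|apply Hk; auto].
  apply cle_incl; intros x Hx; eapply wlt_trans; eauto.
Qed.

Lemma is_card_of_seg (m : O) (A : set O) :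
  is_cardinal m -> (forall z, A z <-> z ≺ m) -> is_card_of m A.
Proof.
  intros Hm HA. split; [split|]; try (apply cle_incl; firstorder).
  intros b [_ Hb] Hbm. apply (Hm b Hbm).
  eapply cle_trans; [|exact Hb]. apply cle_incl; firstorder.
Qed.

Lemma regular_bounded (m : O) (S : set O) :
  regular m -> (forall z, S z -> z ≺ m) -> clt S (seg m) ->
  exists d, d ≺ m /\ forall z, S z -> z ≺ d.
Proof.
  intros [_ [_ Hreg]] HS Hsmall.
  destruct (classic (unbounded_in S m)) as [U|NU]; [exfalso; exact (Hreg S HS U Hsmall)|].
  apply not_all_ex_not in NU as [d Hd]. apply imply_to_and in Hd as [Hdm Hd].
  exists d; split; auto. intros z Sz.
  destruct (wlt_or_wle z d) as [h|h]; auto.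
  exfalso; apply Hd; exists z; auto.
Qed.

Lemma regular_inj_bounded {T : Type} (m : O) (X : set T) :
  regular m -> clt X (seg m) -> exists b, b ≺ m /\ exists e : T -> O, inj_on e X (seg b).
Proof.
  intros Hm [HX HmX]. destruct (cle_inj_on m X (seg m) HX) as [e [Hmap Hinj]].
  destruct (regular_bounded m (fun z => exists x, X x /\ z = e x) Hm) as [b [Hbm Hb]].
  - intros z [x [Hx ->]]; apply Hmap; auto.
  - eapply cle_clt_trans; [apply cle_image|split; auto].
  - exists b; split; auto. exists e; split; auto. intros x Hx; apply Hb; eauto.
Qed.

Definition size_bound {T : Type} (m : O) (A : set T) : O :=
  epsilon (inhabits m) (fun r => r ≺ m /\ cle A (seg r)).

Lemma size_bound_spec {T : Type} (m : O) (A : set T) :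
  regular m -> clt A (seg m) -> size_bound m A ≺ m /\ cle A (seg (size_bound m A)).
Proof.
  intros Hm HA. unfold size_bound; apply epsilon_spec.
  destruct (regular_inj_bounded m A Hm HA) as [b [Hbm [e He]]].
  exists b; split; auto. exact (inj_on_cle e _ _ He).
Qed.

Definition kpair (j : set O -> O) (a b : O) : set O :=
  fun x => x = j (fun y => y = a) \/ x = j (fun y => y = a \/ y = b).

Lemma pred_eq_elim (P Q : set O) (x : O) : P = Q -> P x -> Q x.
Proof. intros ->; auto. Qed.

Lemma kpair_inj (eps : O) (j : set O -> O) :
  (forall P Q, powerset_of eps P -> powerset_of eps Q -> j P = j Q -> P = Q) ->
  forall a b c d, a ≺ eps -> b ≺ eps -> c ≺ eps -> d ≺ eps ->
  kpair j a b = kpair j c d -> a = c /\ b = d.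
Proof.
  intros Hj.
  assert (S1 : forall p, p ≺ eps -> powerset_of eps (fun y => y = p))
    by (intros p hp y ->; auto).
  assert (S2 : forall p q, p ≺ eps -> q ≺ eps -> powerset_of eps (fun y => y = p \/ y = q))
    by (intros p q hp hq y [->| ->]; auto).
  assert (singleton_mem : forall a b x, a ≺ eps -> b ≺ eps -> x ≺ eps ->
            kpair j a b (j (fun y => y = x)) <-> x = a).
  { intros a b x ha hb hx. split; [|intros ->; left; reflexivity].
    intros [E|E]; apply Hj in E; auto.
    - exact (pred_eq_elim _ _ x E eq_refl).
    - symmetry; exact (pred_eq_elim _ _ a (eq_sym E) (or_introl eq_refl)). }
  assert (pair_mem : forall a b y, a ≺ eps -> b ≺ eps -> y ≺ eps ->
            kpair j a b (j (fun z => z = a \/ z = y)) <-> y = a \/ y = b).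
  { intros a b y ha hb hy. split.
    - intros [E|E]; apply Hj in E; auto.
      + left; exact (pred_eq_elim _ _ y E (or_intror eq_refl)).
      + exact (pred_eq_elim _ _ y E (or_intror eq_refl)).
    - intros [->| ->]; [left|right; reflexivity].
      f_equal. apply functional_extensionality; intro z.
      apply propositional_extensionality; tauto. }
  intros a b c d ha hb hc hd E.
  assert (a = c) as <-.
  { apply (singleton_mem c d a); auto. rewrite <- E. apply singleton_mem; auto. }
  assert (H : forall y, y ≺ eps -> (y = a \/ y = b <-> y = a \/ y = d)).
  { intros y hy. rewrite <- (pair_mem a b y), <- (pair_mem a d y), E by auto. reflexivity. }
  split; auto.
  destruct (proj1 (H b hb) (or_intror eq_refl)) as [-> | ->]; auto.
  destruct (proj2 (H d hd) (or_intror eq_refl)) as [-> | ->]; auto.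
Qed.

Section Inaccessible.
Variable k : O.
Hypothesis k_regular : regular k.
Hypothesis k_uncountable : uncountable k.
Hypothesis k_strong_limit : strong_limit k.

Lemma cle_nat_clt {T : Type} (A : set T) : cle A nat_set -> clt A (seg k).
Proof.
  intros H. eapply cle_clt_trans; [exact H|]. split; [apply k_regular|apply k_uncountable].
Qed.

Lemma clt_singleton (x : O) : clt (fun z => z = x) (seg k).
Proof.
  apply cle_nat_clt, (inj_on_cle (fun _ => 0)). split; [intros; exact I|].
  intros a b -> ->; reflexivity.
Qed.

Lemma clt_powerset (X : set O) :
  clt X (seg k) -> clt (fun w : set O => forall u, w u -> X u) (seg k).
Proof.
  intros HX. destruct (regular_inj_bounded k X k_regular HX) as [b [Hb [e [Hmap Hinj]]]].
  eapply cle_clt_trans; [|apply (k_strong_limit b Hb)].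
  apply (inj_on_cle (fun w => fun z => exists u, w u /\ z = e u)). split.
  - intros w Hw z [u [Hu ->]]. apply Hmap; auto.
  - intros w1 w2 H1 H2 E. apply functional_extensionality; intro u.
    apply propositional_extensionality.
    assert (Himg : forall w w', (forall u, w' u -> X u) ->
              (fun z => exists u, w u /\ z = e u) = (fun z => exists u, w' u /\ z = e u) ->
              X u -> w u -> w' u).
    { intros w w' Hw' Ew Hu Hwu.
      destruct (pred_eq_elim _ _ (e u) Ew (ex_intro _ u (conj Hwu eq_refl))) as [u' [Hu' Eu]].
      rewrite (Hinj u u'); auto. }
    split; intro Hu; [apply (Himg w1)|apply (Himg w2)]; auto.
Qed.

Lemma clt_pairs (eps : O) :
  eps ≺ k -> clt (fun p : O * O => fst p ≺ eps /\ snd p ≺ eps) (seg k).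
Proof.
  intros Heps.
  destruct (regular_inj_bounded k _ k_regular (k_strong_limit eps Heps))
    as [e1 [He1 [j [Hjmap Hjinj]]]].
  eapply cle_clt_trans; [|apply (k_strong_limit e1 He1)].
  apply (inj_on_cle (fun p => kpair j (fst p) (snd p))). split.
  - intros [a b] [ha hb] x [->| ->]; apply Hjmap; simpl in *.
    + intros y ->; auto.
    + intros y [->| ->]; auto.
  - intros [a b] [c d] [ha hb] [hc hd] E; simpl in *.
    destruct (kpair_inj eps j Hjinj a b c d) as [-> ->]; auto.
Qed.

Lemma clt_bigunion {T : Type} (t0 : T) (I : set T) (B : T -> set O) :
  clt I (seg k) -> (forall i, I i -> clt (B i) (seg k)) ->
  clt (fun z => exists i, I i /\ B i z) (seg k).
Proof.
  intros HI HB.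
  destruct (regular_inj_bounded k I k_regular HI) as [ga [Hga [idx [idx_map idx_inj]]]].
  destruct (regular_bounded k (fun r => exists i, I i /\ r = size_bound k (B i)) k_regular)
    as [d [Hd Hbound]].
  { intros r [i [Hi ->]]; apply size_bound_spec; auto. }
  { eapply cle_clt_trans; [apply cle_image|exact HI]. }
  assert (HBd : forall i, I i -> cle (B i) (seg d)).
  { intros i Hi. destruct (size_bound_spec k (B i) k_regular (HB i Hi)) as [_ Hle].
    eapply cle_trans; [exact Hle|apply cle_incl].
    intros x hx; eapply wlt_trans; [exact hx|apply Hbound; eauto]. }
  set (code := fun i => epsilon (inhabits (fun x : O => x)) (fun e => inj_on e (B i) (seg d))).
  assert (Hcode : forall i, I i -> inj_on (code i) (B i) (seg d)).
  { intros i Hi. unfold code; apply epsilon_spec. apply (cle_inj_on d), HBd; auto. }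
  set (pick := fun z => epsilon (inhabits t0) (fun i => I i /\ B i z)).
  assert (Hpick : forall z, (exists i, I i /\ B i z) -> I (pick z) /\ B (pick z) z).
  { intros z Hz; unfold pick; apply epsilon_spec; exact Hz. }
  destruct (wle_max ga d) as [eps [Heps [Hga_eps Hd_eps]]].
  eapply cle_clt_trans; [|apply (clt_pairs eps)]; [|destruct Heps as [-> | ->]; auto].
  apply (inj_on_cle (fun z => (idx (pick z), code (pick z) z))). split.
  - intros z Hz. destruct (Hpick z Hz) as [Hi Hz']. simpl. split.
    + eapply wlt_wle_trans; [apply idx_map|]; eauto.
    + eapply wlt_wle_trans; [apply Hcode|]; eauto.
  - intros z z' Hz Hz' E. injection E as E1 E2.
    destruct (Hpick z Hz) as [Hi Hbz]. destruct (Hpick z' Hz') as [Hi' Hbz'].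
    apply idx_inj in E1; auto. rewrite <- E1 in E2, Hbz'. apply (Hcode _ Hi); auto.
Qed.

Lemma clt_union (A B : set O) :
  clt A (seg k) -> clt B (seg k) -> clt (fun z => A z \/ B z) (seg k).
Proof.
  intros HA HB.
  eapply cle_clt_trans; [|apply (clt_bigunion true (fun _ => True) (fun b => if b then A else B))].
  - apply cle_incl. intros z [H|H]; [exists true|exists false]; auto.
  - apply cle_nat_clt, (inj_on_cle (fun b : bool => if b then 0 else 1)).
    split; [intros; exact I|]. intros [] [] _ _ E; auto; discriminate.
  - intros [] _; auto.
Qed.

Lemma seq_sup (s : nat -> O) : (forall n, s n ≺ k) ->
  exists m, m ≺ k /\ (forall n, s n ≼ m) /\ forall c, c ≺ m -> exists n, c ≺ s n.
Proof.
  intros Hs.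
  destruct (regular_bounded k (fun z => exists n, nat_set n /\ z = s n) k_regular)
    as [d [Hd Hbound]].
  { intros z [n [_ ->]]; auto. }
  { apply cle_nat_clt, cle_image. }
  assert (Hdub : forall n, s n ≼ d) by (intros n; left; apply Hbound; exists n; split; [exact I|auto]).
  destruct (wf_min (fun m => forall n, s n ≼ m)) as [m [Hub Hmin]]; [eauto|].
  exists m; split; [|split; auto].
  - destruct (wlt_or_wle d m) as [h|[h| ->]]; [exfalso; exact (Hmin d Hdub h)|eapply wlt_trans; eauto|auto].
  - intros c Hc. apply NNPP; intro N. apply (Hmin c); auto. intros n.
    destruct (wlt_or_wle c (s n)) as [h|h]; [exfalso; eauto|exact h].
Qed.

End Inaccessible.

Lemma Cf_intro (mu m : O) (X y : set O) (h : set O -> set O) :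
  Pk mu X y -> regular m -> (forall z, y z /\ z ≺ mu <-> z ≺ m) ->
  (forall w, Pk m y w ->
     (forall z, h w z -> y z) /\ exists r, y r /\ r ≺ mu /\ cle (h w) (seg r)) ->
  Cf mu X h y.
Proof.
  intros Hy Hm Htrace Hclosed. split; [exact Hy|split].
  - destruct (regular_inhabited m Hm) as [z Hz]. exists z; apply Htrace; exact Hz.
  - exists m; split; [apply is_card_of_seg; [apply regular_cardinal; auto|exact Htrace]|].
    intros w Hw. destruct (Hclosed w Hw) as [Hsub [r [Hr [Hrmu Hle]]]].
    split; [exact Hsub|].
    eapply cle_clt_trans; [exact Hle|apply clt_seg; [apply regular_cardinal; auto|]].
    apply Htrace; auto.
Qed.

Section Closure.
Variables k lam : O.
Hypothesis k_regular : regular k.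
Hypothesis k_uncountable : uncountable k.
Hypothesis k_strong_limit : strong_limit k.
Hypothesis k_le_lam : k ≼ lam.
Variable Q : set O -> set O.
Hypothesis Q_Pk : forall w, Pk k (seg lam) w -> Pk k (seg lam) (Q w).

Inductive stage : O -> O -> Prop :=
| stage_seg a z : z ≺ a -> stage a z
| stage_Q a b w z : b ≺ a -> (forall u, w u -> stage b u) -> Pk k (seg lam) w -> Q w z ->
    stage a z.

Lemma stage_eventually (a z : O) :
  stage a z -> exists b, b ≺ a /\ forall a', b ≺ a' -> stage a' z.
Proof.
  intros [a' z' H|a' b w z' Hb Hw HPk HQ].
  - exists z'; split; auto. intros; apply stage_seg; auto.
  - exists b; split; auto. intros; eapply stage_Q; eauto.
Qed.

Lemma stage_sub (a z : O) : a ≺ k -> stage a z -> z ≺ lam.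
Proof.
  intros Ha Hz; destruct Hz as [a z H|a b w z Hb Hw HPk HQ].
  - eapply wlt_wle_trans; [eapply wlt_trans|]; eauto.
  - apply (Q_Pk w HPk); auto.
Qed.

Lemma stage_small (a : O) : a ≺ k -> clt (stage a) (seg k).
Proof.
  induction (wlt_wf O a) as [a _ IH]. intros Ha.
  set (later := fun b z => exists w, ((forall u, w u -> stage b u) /\ Pk k (seg lam) w) /\ Q w z).
  apply (cle_clt_trans _ (fun z => seg a z \/ exists b, seg a b /\ later b z)).
  { apply cle_incl. intros z [a' z' H|a' b w z' Hb Hw HPk HQ].
    - left; auto.
    - right. exists b; split; auto. exists w; auto. }
  apply (clt_union k k_regular k_uncountable k_strong_limit); [apply clt_seg; auto; apply regular_cardinal; auto|].
  apply (clt_bigunion k k_regular k_strong_limit k);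
    [apply clt_seg; auto; apply regular_cardinal; auto|].
  intros b Hb. apply (clt_bigunion k k_regular k_strong_limit (fun _ => False)).
  - eapply cle_clt_trans; [|apply (clt_powerset k k_regular k_strong_limit (stage b))].
    + apply cle_incl. intros w [H _]; auto.
    + apply IH; auto. eapply wlt_trans; eauto.
  - intros w [_ Hw]. apply Q_Pk; auto.
Qed.

Definition stage_bound (a : O) : O :=
  epsilon (inhabits k) (fun d => d ≺ k /\ forall z, stage a z -> z ≺ k -> z ≺ d).

Lemma stage_bound_spec (a : O) : a ≺ k ->
  stage_bound a ≺ k /\ forall z, stage a z -> z ≺ k -> z ≺ stage_bound a.
Proof.
  intros Ha. unfold stage_bound; apply epsilon_spec.
  destruct (regular_bounded k (fun z => stage a z /\ z ≺ k) k_regular) as [d [Hd Hbound]].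
  - intros z [_ H]; exact H.
  - eapply cle_clt_trans; [|apply (stage_small a Ha)]. apply cle_incl; intros z [H _]; exact H.
  - exists d; split; auto.
Qed.

Definition stage_closed (m : O) : Prop :=
  m ≺ k /\ forall z, stage m z -> z ≺ k -> z ≺ m.

Lemma stage_closed_club : club_in stage_closed k.
Proof.
  split; [|split].
  - intros m [Hm _]; exact Hm.
  - intros b Hb.
    set (s := fun n => Nat.iter n stage_bound b).
    assert (Hs : forall n, s n ≺ k).
    { induction n as [|n IH]; [exact Hb|apply (stage_bound_spec _ IH)]. }
    destruct (seq_sup k k_regular k_uncountable s Hs) as [m [Hm [Hub Hlub]]].
    exists m; split; [split; auto|split; [exact Hm|exact (Hub 0)]].
    intros z Hz Hzk. destruct (stage_eventually _ _ Hz) as [c [Hc Hstage]].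
    destruct (Hlub c Hc) as [n Hn].
    eapply wlt_wle_trans; [|apply (Hub (S n))].
    apply (stage_bound_spec _ (Hs n)); auto.
  - intros g Hg _ Hlim. split; [exact Hg|]. intros z Hz Hzk.
    destruct (stage_eventually _ _ Hz) as [b [Hb Hstage]].
    destruct (Hlim b Hb) as [d [[_ Hd] [Hbd Hdg]]].
    eapply wlt_trans; [apply Hd; auto|exact Hdg].
Qed.

Lemma stage_closed_trace (m : O) :
  stage_closed m -> forall z, stage m z /\ z ≺ k <-> z ≺ m.
Proof.
  intros [Hm Hcl] z. split; [intros [H1 H2]; auto|].
  intros Hz; split; [apply stage_seg; auto|eapply wlt_trans; eauto].
Qed.

(* At a regular closure point, every [w] of size below [m] already lies in an
   earlier stage, so [Q w] is added at stage [m]. *)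
Lemma stage_closed_regular (m : O) (w : set O) :
  stage_closed m -> regular m -> Pk m (stage m) w ->
  Pk k (seg lam) w /\ forall z, Q w z -> stage m z.
Proof.
  intros [Hmk _] Hm [Hw Hwm].
  set (born := fun u => epsilon (inhabits m) (fun b => b ≺ m /\ forall a', b ≺ a' -> stage a' u)).
  assert (Hborn : forall u, w u -> born u ≺ m /\ forall a', born u ≺ a' -> stage a' u).
  { intros u Hu. unfold born; apply epsilon_spec, stage_eventually; auto. }
  destruct (regular_bounded m (fun b => exists u, w u /\ b = born u) Hm) as [d [Hd Hbound]].
  { intros b [u [Hu ->]]; apply Hborn; auto. }
  { eapply cle_clt_trans; [apply cle_image|exact Hwm]. }
  assert (Hwd : forall u, w u -> stage d u).
  { intros u Hu. apply (Hborn u Hu). apply Hbound; eauto. }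
  assert (HwPk : Pk k (seg lam) w).
  { split; [intros u Hu; exact (stage_sub m u Hmk (Hw u Hu))|].
    eapply clt_cle_trans; [exact Hwm|apply cle_incl].
    intros x Hx; eapply wlt_trans; eauto. }
  split; [exact HwPk|]. intros z Hz. exact (stage_Q m d w z Hd Hwd HwPk Hz).
Qed.

Lemma stage_Cf (h : set O -> set O) (m : O) :
  (forall w, Pk k (seg lam) w -> Pk k (seg lam) (h w)) ->
  (forall w z, Pk k (seg lam) w -> h w z -> Q w z) ->
  (forall w, Pk k (seg lam) w -> Q w (size_bound k (h w))) ->
  stage_closed m -> regular m -> Cf k (seg lam) h (stage m).
Proof.
  intros Hh HhQ Hsize Hcl Hm.
  apply (Cf_intro k m); [|exact Hm|apply stage_closed_trace; exact Hcl|].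
  - split; [intros z Hz; exact (stage_sub m z (proj1 Hcl) Hz)|apply stage_small, Hcl].
  - intros w Hw. destruct (stage_closed_regular m w Hcl Hm Hw) as [HwPk HQm].
    destruct (size_bound_spec k (h w) k_regular (proj2 (Hh w HwPk))) as [Hr Hle].
    split; [intros z Hz; apply HQm, HhQ; auto|].
    exists (size_bound k (h w)); auto.
Qed.

End Closure.

Lemma Cf_strongly_stationary (k lam : O) (f : set O -> set O) :
  Mahlo k -> k ≼ lam -> (forall y, Pk k (seg lam) y -> Pk k (seg lam) (f y)) ->
  strongly_stationary k (seg lam) (Cf k (seg lam) f).
Proof.
  intros [[Hunc [Hreg Hsl]] Hstat] Hle Hf g Hg.
  set (Q := fun w z => f w z \/ g w z \/ z = size_bound k (f w) \/ z = size_bound k (g w)).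
  assert (HQ : forall w, Pk k (seg lam) w -> Pk k (seg lam) (Q w)).
  { intros w Hw.
    destruct (size_bound_spec k (f w) Hreg (proj2 (Hf w Hw))) as [Hfk _].
    destruct (size_bound_spec k (g w) Hreg (proj2 (Hg w Hw))) as [Hgk _].
    split.
    - intros z [Hz|[Hz|[->| ->]]]; [apply (Hf w Hw)|apply (Hg w Hw)|..]; auto;
        eapply wlt_wle_trans; eauto.
    - repeat apply (clt_union k Hreg Hunc Hsl);
        [apply (Hf w Hw)|apply (Hg w Hw)|apply (clt_singleton k Hreg Hunc)..]. }
  destruct (Hstat _ (stage_closed_club k lam Hreg Hunc Hsl Q HQ)) as [m [[_ Hm] Hcl]].
  exists (stage k lam Q m); split;
    apply (stage_Cf k lam Hreg Hunc Hsl Hle Q HQ); auto; unfold Q; tauto.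
Qed.

Lemma Cf_const (mu : O) (X y w : set O) :
  Cf mu X (fun _ => w) y -> exists b, is_card_of b (inter y (seg mu)) /\ Pk b y w.
Proof.
  intros [_ [[z [Hy Hz]] [b [Hb Hclosed]]]]. exists b; split; [exact Hb|].
  apply (Hclosed (fun _ => False)). split; [intros _ []|].
  apply clt_empty. apply (cle_inhabited _ _ z (proj2 (proj1 Hb))). split; auto.
Qed.

Lemma is_card_of_inter_le (mu a : O) (x : set O) :
  is_card_of a (inter x (seg mu)) -> is_cardinal a -> forall z, z ≺ a -> z ≺ mu.
Proof.
  intros [[Ha _] _] Hcard z Hz. destruct (wlt_total O mu a) as [h|[->|h]]; auto.
  - exfalso. apply (Hcard mu h). eapply cle_trans; [exact Ha|].
    apply cle_incl; intros u [_ Hu]; exact Hu.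
  - eapply wlt_trans; eauto.
Qed.

(* Given [w] in [P_a x], stationarity applied to the constant function [w]
   yields [y] in [C_f] containing [w] with [|w| < |y ∩ a| <= |y ∩ k|];
   closure of [y] under [f] then puts [f w] in [P_a x]. *)
Lemma Cf_reflection (k a : O) (X x : set O) (f : set O -> set O) :
  Pk k X x -> is_card_of a (inter x (seg k)) -> regular a ->
  strongly_stationary a x (fun y => Cf k X f y /\ Pk a x y) -> Cf k X f x.
Proof.
  intros Hx Ha Hreg Hstat.
  assert (Hak := is_card_of_inter_le k a x Ha (regular_cardinal a Hreg)).
  split; [exact Hx|split].
  - destruct (regular_inhabited a Hreg) as [z Hz].
    exact (cle_inhabited _ _ z (proj1 (proj1 Ha)) Hz).
  - exists a; split; [exact Ha|]. intros w Hw.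
    destruct (Hstat (fun _ => w)) as [y [[[_ [_ [c [Hc Hfc]]]] [Hyx Hya]] Hconst]]; auto.
    destruct (Cf_const a x y w Hconst) as [b [Hb [Hwy Hwb]]].
    assert (Hbc : cle (seg b) (seg c)).
    { eapply cle_trans; [apply (proj1 (proj1 Hb))|].
      eapply cle_trans; [|apply (proj2 (proj1 Hc))].
      apply cle_incl; intros u [Hu Hua]; split; [exact Hu|apply Hak, Hua]. }
    destruct (Hfc w (conj Hwy (clt_cle_trans _ _ _ Hwb Hbc))) as [Hfy Hfc'].
    split; [intros u Hu; apply Hyx, Hfy, Hu|].
    eapply cle_clt_trans; [|exact Hya].
    eapply cle_trans; [apply (proj1 Hfc')|].
    eapply cle_trans; [apply (proj1 (proj1 Hc))|].
    apply cle_incl; intros u [Hu _]; exact Hu.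
Qed.

End Ordinals.

Theorem lemma5p1 (O : WO) (kappa lambda : O) :
  Mahlo kappa -> wle kappa lambda ->
  forall f : set O -> set O,
    (forall y, Pk kappa (seg lambda) y -> Pk kappa (seg lambda) (f y)) ->
    one_club kappa (seg lambda) (Cf kappa (seg lambda) f).
Proof.
  intros Hmahlo Hle f Hf. split; [|split].
  - intros y Hy; apply Hy.
  - exact (Cf_strongly_stationary kappa lambda f Hmahlo Hle Hf).
  - intros x Hx a Ha [_ [Hreg _]]. exact (Cf_reflection kappa a (seg lambda) x f Hx Ha Hreg).
Qed.
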